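(* Let $\mathsf A_1,\dots,\mathsf A_n$ be quantum observables on a finite-dimensional Hilbert space with finite outcome sets, and for each $j$ let $\widetilde{\mathsf A}_j(x')=\sum_x\nu_j(x',x)\mathsf A_j(x)$ for some stochastic matrix $\nu_j$ (a post-processing of $\mathsf A_j$). Let $\mathcal S_0$ be a set of states. If $\widetilde{\mathsf A}_1,\dots,\widetilde{\mathsf A}_n$ are $\mathcal S_0$-incompatible, then $\mathsf A_1,\dots,\mathsf A_n$ are $\mathcal S_0$-incompatible, and $$\chi_{incomp}(\widetilde{\mathsf A}_1,\dots,\widetilde{\mathsf A}_n)\ge\chi_{incomp}(\mathsf A_1,\dots,\mathsf A_n),\qquad\chi_{comp}(\widetilde{\mathsf A}_1,\dots,\widetilde{\mathsf A}_n)\ge\chi_{comp}(\mathsf A_1,\dots,\mathsf A_n).$$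
   Context: $\mathcal S$ denotes the set of density operators on a $d$-dimensional Hilbert space. An observable with finite outcome set $X$ is a POVM $x\mapsto\mathsf A(x)$. A stochastic matrix $\nu$ satisfies $\nu(x',x)\ge0$ and $\sum_{x'}\nu(x',x)=1$. Observables $\mathsf A_1,\dots,\mathsf A_n$ (outcome sets $X_1,\dots,X_n$) are compatible if there is an observable $\mathsf G$ on $X_1\times\dots\times X_n$ whose marginals ($\mathsf A_j(x_j)=\sum_{x_l,l\ne j}\mathsf G(x_1,\dots,x_n)$) are the $\mathsf A_j$; otherwise incompatible. For $\mathcal S_0\subset\mathcal S$, they are $\mathcal S_0$-compatible if there exist compatible observables $\mathsf A'_1,\dots,\mathsf A'_n$ (same outcome sets) with $\mathrm{Tr}[\varrho\mathsf A'_j(x)]=\mathrm{Tr}[\varrho\mathsf A_j(x)]$ for all $j,x$ and $\varrho\in\mathcal S_0$; otherwise $\mathcal S_0$-incompatible. For incompatible observables, $\chi_{incomp}=\min\{\dim\mathrm{aff}\mathcal S_0+1:\mathcal S_0\subset\mathcal S,\ \mathcal S_0\text{-incompatible}\}$ and $\chi_{comp}=\max\{\dim\mathrm{aff}\mathcal S_0+1:\mathcal S_0\subset\mathcal S,\ \mathcal S_0\text{-compatible}\}$. *)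

(* Hilbert space = C^d with C an arbitrary numClosedFieldType
   (e.g. the complex numbers R[i]); operators are 'M[C]_d. *)
From HB Require Import structures.
From mathcomp Require Import all_boot all_order all_algebra.
From Stdlib Require Import ClassicalEpsilon.

Set Implicit Arguments.
Unset Strict Implicit.
Unset Printing Implicit Defensive.

Import Order.TTheory GRing.Theory Num.Theory.
Local Open Scope ring_scope.

(* classical maximum / minimum of a set of naturals (meaningful when attained) *)
Definition nat_max (P : nat -> Prop) : nat :=
  epsilon (inhabits 0%N) (fun m => P m /\ forall k, P k -> (k <= m)%N).
Definition nat_min (P : nat -> Prop) : nat :=
  epsilon (inhabits 0%N) (fun m => P m /\ forall k, P k -> (m <= k)%N).

Section QuantumDefs.
Variable C : numClosedFieldType.
Variable d : nat.

Definition psd (M : 'M[C]_d) : Prop :=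
  forall v : 'cV[C]_d, 0 <= ((map_mx Num.conj v)^T *m M *m v) ord0 ord0.

Definition is_state (rho : 'M[C]_d) : Prop := psd rho /\ \tr rho = 1.

Definition is_observable (X : finType) (A : X -> 'M[C]_d) : Prop :=
  (forall x, psd (A x)) /\ \sum_(x : X) A x = 1%:M.

Definition joint_space (n : nat) (X : 'I_n -> finType) : finType :=
  {dffun forall j : 'I_n, X j}.

Definition compatible (n : nat) (X : 'I_n -> finType)
    (A : forall j : 'I_n, X j -> 'M[C]_d) : Prop :=
  exists G : joint_space X -> 'M[C]_d,
    is_observable G /\
    forall (j : 'I_n) (x : X j), A j x = \sum_(g : joint_space X | g j == x) G g.

Definition S0_compatible (n : nat) (X : 'I_n -> finType)
    (S0 : 'M[C]_d -> Prop) (A : forall j : 'I_n, X j -> 'M[C]_d) : Prop :=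
  exists A' : forall j : 'I_n, X j -> 'M[C]_d,
    compatible A' /\
    forall (j : 'I_n) (x : X j) (rho : 'M[C]_d),
      S0 rho -> \tr (rho *m A' j x) = \tr (rho *m A j x).

Definition S0_incompatible (n : nat) (X : 'I_n -> finType)
    (S0 : 'M[C]_d -> Prop) (A : forall j : 'I_n, X j -> 'M[C]_d) : Prop :=
  ~ S0_compatible S0 A.

Definition aff_indep (k : nat) (f : 'I_k -> 'M[C]_d) : Prop :=
  forall c : 'I_k -> C,
    (forall i, c i \is Num.real) ->
    \sum_(i < k) c i = 0 ->
    \sum_(i < k) c i *: f i = 0 ->
    forall i, c i = 0.

(* dim aff S0 + 1 = maximal number of affinely independent points of S0
   (= 0 for S0 empty) *)
Definition affdim1 (S0 : 'M[C]_d -> Prop) : nat :=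
  nat_max (fun k => exists f : 'I_k -> 'M[C]_d,
                      (forall i, S0 (f i)) /\ aff_indep f).

Definition chi_incomp (n : nat) (X : 'I_n -> finType)
    (A : forall j : 'I_n, X j -> 'M[C]_d) : nat :=
  nat_min (fun k => exists S0 : 'M[C]_d -> Prop,
     (forall rho, S0 rho -> is_state rho) /\ S0_incompatible S0 A /\ affdim1 S0 = k).

Definition chi_comp (n : nat) (X : 'I_n -> finType)
    (A : forall j : 'I_n, X j -> 'M[C]_d) : nat :=
  nat_max (fun k => exists S0 : 'M[C]_d -> Prop,
     (forall rho, S0 rho -> is_state rho) /\ S0_compatible S0 A /\ affdim1 S0 = k).

Definition stochastic (X Y : finType) (nu : Y -> X -> C) : Prop :=
  (forall y x, 0 <= nu y x) /\ forall x, \sum_(y : Y) nu y x = 1.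

Definition postproc (n : nat) (X Y : 'I_n -> finType)
    (nu : forall j : 'I_n, Y j -> X j -> C)
    (A : forall j : 'I_n, X j -> 'M[C]_d) : forall j : 'I_n, Y j -> 'M[C]_d :=
  fun j y => \sum_(x : X j) nu j y x *: A j x.

End QuantumDefs.

(* Post-processing preserves compatibility: if G is a joint observable for A_1, ..., A_n, then
   y |-> \sum_g (\prod_j nu_j(y_j, g_j)) G(g) is a joint observable for the post-processed
   observables, and post-processing acts linearly on the outcome probabilities Tr[rho A_j(x)].
   Hence S0-compatibility passes from the A_j to their post-processings, and S0-incompatibility
   passes back.  So the sets of values of dim aff S0 + 1 over which chi_incomp minimises and
   chi_comp maximises are nested in the right direction; both extrema are attained because the
   sets are nonempty (the given S0, resp. the empty set of states together with a trivially
   compatible family) and bounded by 2 d^2 + 1, the real dimension of d x d complex matrices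
   plus one. *)

From HB Require Import structures.
From mathcomp Require Import all_boot all_order all_algebra.
From Stdlib Require Import Classical ClassicalEpsilon.
Import Order.TTheory GRing.Theory Num.Theory.
Local Open Scope ring_scope.

Lemma nat_minP {P : nat -> Prop} {k : nat} :
  P k -> P (nat_min P) /\ forall k, P k -> (nat_min P <= k)%N.
Proof.
move=> Pk; apply: (epsilon_spec _ (fun m => P m /\ forall k, P k -> (m <= k)%N)).
elim/ltn_ind: k Pk => m IHm Pm.
case: (classic (exists2 k, (k < m)%N & P k)) => [[k ltkm Pk] | nosmaller].
  exact: IHm ltkm Pk.
exists m; split=> // k Pk; rewrite leqNgt; apply/negP => ltkm.
by apply: nosmaller; exists k.
Qed.

Lemma nat_maxP {P : nat -> Prop} {k N : nat} :
  P k -> (forall k, P k -> (k <= N)%N) ->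
  P (nat_max P) /\ forall k, P k -> (k <= nat_max P)%N.
Proof.
move=> Pk leN; apply: (epsilon_spec _ (fun m => P m /\ forall k, P k -> (k <= m)%N)).
elim: N leN => [|N IHN] leN.
  exists 0%N; split=> [|j /leN //].
  by move: (leN k Pk); rewrite leqn0 => /eqP <-.
case: (classic (P N.+1)) => [PN1 | nPN1]; first by exists N.+1.
apply: IHN => j Pj; move: (leN j Pj); rewrite leq_eqVlt => /predU1P[ej|//].
by rewrite ej in Pj.
Qed.

Lemma nat_min_le_sub (P Q : nat -> Prop) :
  (forall k, P k -> Q k) -> (exists k, P k) -> (nat_min Q <= nat_min P)%N.
Proof.
move=> sPQ [k Pk]; have [PminP _] := nat_minP Pk.
by have [_ minQ] := nat_minP (sPQ _ Pk); apply/minQ/sPQ.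
Qed.

Lemma nat_max_le_sub (P Q : nat -> Prop) (N : nat) :
  (forall k, P k -> Q k) -> (exists k, P k) -> (forall k, Q k -> (k <= N)%N) ->
  (nat_max P <= nat_max Q)%N.
Proof.
move=> sPQ [k Pk] leN.
have [PmaxP _] := nat_maxP Pk (fun j Pj => leN j (sPQ j Pj)).
by have [_ maxQ] := nat_maxP (sPQ _ Pk) leN; apply/maxQ/sPQ.
Qed.

Lemma bigA_distr_dffun {R : comPzSemiRingType} {I : finType} {T_ : I -> finType}
    (Q : forall i, pred (T_ i)) (F : forall i, T_ i -> R) :
  \prod_i \sum_(z | Q i z) F i z =
  \sum_(y : {dffun forall i, T_ i} | [forall i, Q i (y i)]) \prod_i F i (y i).
Proof.
pose P_ i := [ffun z => if Q i z then F i z else 0] : {ffun T_ i -> R}.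
transitivity (\sum_(y : {dffun forall i, T_ i}) \prod_i P_ i (y i)); last first.
  rewrite [RHS]big_mkcond; apply: eq_bigr => y _.
  case: (boolP [forall i, Q i (y i)]) => [/forallP Qy | /forallPn [i nQyi]].
    by apply: eq_bigr => i _; rewrite ffunE Qy.
  by rewrite (bigD1 i) //= ffunE (negbTE nQyi) mul0r.
rewrite (reindex (@dffun_of_fprod I T_)) /=; last exact/onW_bij/dffun_of_fprod_bij.
under [RHS]eq_bigr do under eq_bigr do rewrite /dffun_of_fprod ffunE.
transitivity (\prod_i \sum_(t in tagged_with T_ i) untag 0 (P_ i) t).
  apply: eq_bigr => i _; rewrite -(big_tag (fun i (z : T_ i) => P_ i z)).
  by rewrite [LHS]big_mkcond; apply: eq_bigr => z _; rewrite ffunE.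
rewrite bigA_distr_big_dep (big_fprod _ _ P_); apply: eq_bigl => g.
by apply/familyP/familyP => Pg i; move: (Pg i); rewrite !inE.
Qed.

Section Observables.
Context {C : numClosedFieldType} {d : nat}.

Lemma psd_sum (I : finType) (P : pred I) (M : I -> 'M[C]_d) :
  (forall i, P i -> psd (M i)) -> psd (\sum_(i | P i) M i).
Proof.
move=> psdM v; rewrite mulmx_sumr mulmx_suml summxE.
by apply: sumr_ge0 => i Pi; apply: psdM.
Qed.

Lemma psdZ (a : C) (M : 'M[C]_d) : 0 <= a -> psd M -> psd (a *: M).
Proof. by move=> a_ge0 psdM v; rewrite -scalemxAr -scalemxAl mxE mulr_ge0. Qed.

Lemma psd1 : psd (1%:M : 'M[C]_d).
Proof.
move=> v; rewrite mulmx1 mxE; apply: sumr_ge0 => i _.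
by rewrite !mxE mulrC mul_conjC_ge0.
Qed.

Lemma is_observable_point {T : finType} (t0 : T) :
  is_observable (fun t : T => (t == t0)%:R *: (1%:M : 'M[C]_d)).
Proof.
split=> [t | ]; first exact/psdZ/psd1.
by rewrite (bigD1 t0) //= big1 ?eqxx ?scale1r ?addr0 // => t /negbTE ->; rewrite scale0r.
Qed.

Lemma compatible_marginals {n : nat} {X : 'I_n -> finType} {G : joint_space X -> 'M[C]_d} :
  is_observable G -> compatible (fun j x => \sum_(g : joint_space X | g j == x) G g).
Proof. by move=> obsG; exists G. Qed.

Lemma exists_compatible {n : nat} {X : 'I_n -> finType} {A : forall j : 'I_n, X j -> 'M[C]_d} :
  (forall j, is_observable (A j)) ->
  exists A' : forall j : 'I_n, X j -> 'M[C]_d, compatible A'.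
Proof.
move=> obsA; case: (classic (exists j, #|X j| = 0%N)) => [[j0 X0_empty] | X_nonempty].
  (* The joint outcome space is then empty, so a joint observable exists only because 1%:M = 0. *)
  have one_eq0 : (1%:M : 'M[C]_d) = 0.
    by case: (obsA j0) => _ <-; apply: big_pred0 => x; exact: (card0_eq X0_empty).
  exists (fun j x => \sum_(g : joint_space X | g j == x) 1%:M); apply: compatible_marginals.
  by split=> [g | ]; [apply: psd1 | rewrite big1 // => g _; rewrite one_eq0].
have X_gt0 j : (0 < #|X j|)%N by rewrite lt0n; apply/eqP => Xj0; apply: X_nonempty; exists j.
pose g0 : joint_space X := [ffun j => enum_val (Ordinal (X_gt0 j))].
by eexists; apply: compatible_marginals (is_observable_point g0).
Qed.

End Observables.

Section PostProcessing.
Context {C : numClosedFieldType} {d n : nat} {X Y : 'I_n -> finType}.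
Context {nu : forall j : 'I_n, Y j -> X j -> C}.
Hypothesis nu_stochastic : forall j : 'I_n, stochastic (nu j).

Definition joint_postproc (y : joint_space Y) (g : joint_space X) : C :=
  \prod_j nu j (y j) (g j).

Lemma joint_postproc_ge0 y g : 0 <= joint_postproc y g.
Proof. by apply: prodr_ge0 => j _; case: (nu_stochastic j). Qed.

Lemma joint_postproc_sum g : \sum_y joint_postproc y g = 1.
Proof.
rewrite (eq_bigl (fun y : joint_space Y => [forall j, predT (y j)])) => [|y]; last first.
  by apply/esym/forallP.
rewrite -(bigA_distr_dffun (fun j => predT) (fun j z => nu j z (g j))).
by apply: big1 => j _; case: (nu_stochastic j).
Qed.

Lemma joint_postproc_marginal g j (y0 : Y j) :
  \sum_(y : joint_space Y | y j == y0) joint_postproc y g = nu j y0 (g j).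
Proof.
pose Q k (z : Y k) := (k != j) || (Tagged Y z == Tagged Y y0).
rewrite (eq_bigl (fun y : joint_space Y => [forall k, Q k (y k)])) => [|y]; last first.
  apply/eqP/forallP => [yj k | Qy]; rewrite /Q.
    by case: (k =P j) => //= kj; subst k; rewrite yj.
  by move: (Qy j); rewrite /Q eqxx eq_Tagged => /eqP.
rewrite -(bigA_distr_dffun Q (fun k z => nu k z (g k))) (bigD1 j) //=.
rewrite [X in _ * X]big1 ?mulr1 => [|k kj].
  by rewrite (eq_bigl (pred1 y0)) ?big_pred1_eq // => z; rewrite /Q eqxx eq_Tagged.
by rewrite (eq_bigl predT) => [|z]; [case: (nu_stochastic k) | rewrite /Q kj].
Qed.

Lemma compatible_postproc (A : forall j : 'I_n, X j -> 'M[C]_d) :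
  compatible A -> compatible (postproc nu A).
Proof.
move=> [G [[psdG sumG] margG]].
exists (fun y => \sum_g joint_postproc y g *: G g); split; first split.
- by move=> y; apply: psd_sum => g _; apply/psdZ/psdG/joint_postproc_ge0.
- rewrite exchange_big /= -sumG; apply: eq_bigr => g _.
  by rewrite -scaler_suml joint_postproc_sum scale1r.
move=> j y0; rewrite /postproc exchange_big /=.
rewrite (partition_big (fun g : joint_space X => g j) predT) //=.
apply: eq_bigr => x _; rewrite margG scaler_sumr; apply: eq_bigr => g /eqP gj.
by rewrite -scaler_suml joint_postproc_marginal gj.
Qed.

Lemma S0_compatible_postproc (S0 : 'M[C]_d -> Prop) (A : forall j : 'I_n, X j -> 'M[C]_d) :
  S0_compatible S0 A -> S0_compatible S0 (postproc nu A).
Proof.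
move=> [A' [compatA' trA']]; exists (postproc nu A'); split.
  exact: compatible_postproc.
move=> j y rho S0rho; rewrite /postproc !mulmx_sumr !linear_sum.
by apply: eq_bigr => x _; rewrite -!scalemxAr !linearZ /= trA'.
Qed.

End PostProcessing.

Section AffineDimension.
Context {C : numClosedFieldType} {d : nat}.

Lemma real_mx_row_dependent {k m : nat} {W : 'M[C]_(k, m)} :
  (forall i j, W i j \is Num.real) -> (m < k)%N ->
  exists c : 'rV[C]_k, [/\ forall i, c 0 i \is Num.real, c *m W = 0 & c != 0].
Proof.
move=> W_real lt_mk.
have : ~~ row_free W by rewrite /row_free neq_ltn (leq_ltn_trans (rank_leq_col W)).
rewrite -kermx_eq0 => /matrix0Pn [i0 [j0 ker_ne0]].
have [v vW0 v_ne0] : exists2 v : 'rV_k, v *m W = 0 & v != 0.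
  exists (row i0 (kermx W)); first by rewrite -row_mul mulmx_ker row0.
  by apply/matrix0Pn; exists 0, j0; rewrite mxE.
have partW0 (part : {additive C -> C}) :
    {in Num.real, forall w, {morph part : z / z * w}} -> map_mx part v *m W = 0.
  move=> partM; apply/rowP => j; have /rowP/(_ j) := vW0; rewrite !mxE => vWj0.
  transitivity (part (\sum_i v 0 i * W i j)); last by rewrite vWj0 raddf0.
  by rewrite raddf_sum; apply: eq_bigr => i _; rewrite mxE partM ?W_real.
have ReW0 := partW0 (Re (C:=C)) (@ReMr C).
have ImW0 := partW0 (Im (C:=C)) (@ImMr C).
have [Re_v0 | Re_v_ne0] := eqVneq (map_mx (Re (C:=C)) v) 0; last first.
  by exists (map_mx (Re (C:=C)) v); split=> // i; rewrite mxE Creal_Re.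
exists (map_mx (Im (C:=C)) v); split=> // [i | ]; first by rewrite mxE Creal_Im.
apply: contraNneq v_ne0 => Im_v0.
apply/eqP/rowP => j; have /rowP/(_ j) := Re_v0; have /rowP/(_ j) := Im_v0.
by rewrite !mxE => Im0 Re0; rewrite [LHS]Crect Re0 Im0 mulr0 addr0.
Qed.

(* The constant coordinate turns affine relations into linear ones; taking real and imaginary
   parts keeps the coordinates real, as [aff_indep] only allows real coefficients. *)
Definition affine_coord (M : 'M[C]_d) (t : option (bool * 'I_d * 'I_d)) : C :=
  match t with
  | None => 1
  | Some (true, a, b) => 'Re (M a b)
  | Some (false, a, b) => 'Im (M a b)
  end.

Lemma affine_coord_real M t : affine_coord M t \is Num.real.
Proof. by case: t => [[[[] a] b]|] /=; rewrite ?Creal_Re ?Creal_Im ?real1. Qed.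

Lemma affine_coord_relation {k : nat} {f : 'I_k -> 'M[C]_d} {c : 'I_k -> C} :
  (forall t, \sum_i c i * affine_coord (f i) t = 0) ->
  \sum_i c i = 0 /\ \sum_i c i *: f i = 0.
Proof.
move=> rel; split; first by have := rel None; under eq_bigr do rewrite /= mulr1.
apply/matrixP => a b; rewrite summxE mxE.
transitivity (\sum_i c i * affine_coord (f i) (Some (true, a, b)) +
              'i * \sum_i c i * affine_coord (f i) (Some (false, a, b))).
  rewrite mulr_sumr -big_split; apply: eq_bigr => i _.
  by rewrite mxE {1}[f i a b]Crect mulrDr mulrCA.
by rewrite !rel mulr0 addr0.
Qed.

Lemma aff_indep_card_le (k : nat) (f : 'I_k -> 'M[C]_d) :
  aff_indep f -> (k <= (2 * d ^ 2).+1)%N.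
Proof.
move=> f_indep; rewrite leqNgt; apply/negP => lt_dim_k.
pose W := \matrix_(i < k, t < #|{: option (bool * 'I_d * 'I_d)}|)
  affine_coord (f i) (enum_val t).
have lt_card_k : (#|{: option (bool * 'I_d * 'I_d)}| < k)%N.
  by rewrite card_option !card_prod card_bool card_ord -mulnA.
have W_real i t : W i t \is Num.real by rewrite mxE affine_coord_real.
have [c [c_real cW0 c_ne0]] := real_mx_row_dependent W_real lt_card_k.
have rel t : \sum_i c 0 i * affine_coord (f i) t = 0.
  transitivity ((c *m W) 0 (enum_rank t)); last by rewrite cW0 mxE.
  by rewrite mxE; apply: eq_bigr => i _; rewrite mxE enum_rankK.
have [sum_c0 comb_c0] := affine_coord_relation rel.
apply: (negP c_ne0); apply/eqP/rowP => i.
by rewrite mxE (f_indep (fun i => c 0 i)).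
Qed.

Definition has_aff_indep (S0 : 'M[C]_d -> Prop) (k : nat) : Prop :=
  exists f : 'I_k -> 'M[C]_d, (forall i, S0 (f i)) /\ aff_indep f.

Lemma affdim1_le (S0 : 'M[C]_d -> Prop) : (affdim1 S0 <= (2 * d ^ 2).+1)%N.
Proof.
have has0 : has_aff_indep S0 0 by exists (fun _ => 0); split=> [[] | c _ _ _ []].
have bounded k : has_aff_indep S0 k -> (k <= (2 * d ^ 2).+1)%N.
  by case=> f [_ /aff_indep_card_le].
by have [/bounded] := nat_maxP has0 bounded.
Qed.

End AffineDimension.

Theorem proposition4p2 (C : numClosedFieldType) (d n : nat)
    (X Y : 'I_n -> finType)
    (A : forall j : 'I_n, X j -> 'M[C]_d)
    (nu : forall j : 'I_n, Y j -> X j -> C)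
    (S0 : 'M[C]_d -> Prop) :
  (forall j, is_observable (A j)) ->
  (forall j, stochastic (nu j)) ->
  (forall rho, S0 rho -> is_state rho) ->
  S0_incompatible S0 (postproc nu A) ->
  [/\ S0_incompatible S0 A,
      (chi_incomp A <= chi_incomp (postproc nu A))%N &
      (chi_comp A <= chi_comp (postproc nu A))%N].
Proof.
move=> obsA stoch_nu S0_states S0_incomp_post.
have incomp_of_post S : S0_incompatible S (postproc nu A) -> S0_incompatible S A.
  by move=> incomp_post /(S0_compatible_postproc stoch_nu).
split; first exact: incomp_of_post.
- apply: nat_min_le_sub; last by exists (affdim1 S0), S0.
  by move=> k [S [states_S [/incomp_of_post incomp_S <-]]]; exists S.
- have [A' compatA'] := exists_compatible obsA.
  apply: (@nat_max_le_sub _ _ (2 * d ^ 2).+1).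
  + move=> k [S [states_S [compat_S <-]]]; exists S.
    by split=> //; split=> //; apply: S0_compatible_postproc.
  + pose S_empty (rho : 'M[C]_d) := False.
    by exists (affdim1 S_empty), S_empty; split=> //; split=> //; exists A'.
  + by move=> k [S [_ [_ <-]]]; apply: affdim1_le.
Qed.
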